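(* Let $X$ be a CAT(0) Euclidean polygonal complex and let $x_1,x_2,x_3,x_4\in X$. If $\overline{x_1x_2}\cap\overline{x_3x_4}\neq\emptyset$, then $$\overline{x_1x_3}\cap\overline{x_2x_4}\subseteq\overline{x_1x_2}\cap\overline{x_3x_4}\quad\text{and}\quad\overline{x_1x_4}\cap\overline{x_2x_3}\subseteq\overline{x_1x_2}\cap\overline{x_3x_4}.$$ Hence, for $\{i,j,k,l\}=\{i',j',k',l'\}=\{1,2,3,4\}$, we have $\overline{x_ix_j}\cap\overline{x_kx_l}=\overline{x_{i'}x_{j'}}\cap\overline{x_{k'}x_{l'}}$ whenever both intersections are non-empty.
   Context: A CAT(0) Euclidean polygonal complex is a 2-dimensional polygonal complex whose cells are convex Euclidean polygons, with its induced length metric, assumed CAT(0). $\overline{ab}$ denotes the unique geodesic segment between $a$ and $b$. *)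

From Stdlib Require Import Reals Lra List Permutation.
Import ListNotations.
Open Scope R_scope.

Definition pt2 := (R * R)%type.

Definition edist (a b : pt2) : R :=
  sqrt ((fst a - fst b)^2 + (snd a - snd b)^2).

Fixpoint wsum (w : list R) (L : list pt2) : pt2 :=
  match w, L with
  | a :: w', p :: L' =>
      let s := wsum w' L' in (fst s + a * fst p, snd s + a * snd p)
  | _, _ => (0, 0)
  end.

Definition in_hull (L : list pt2) (v : pt2) : Prop :=
  exists w : list R, length w = length L /\ Forall (Rle 0) w /\
    fold_right Rplus 0 w = 1 /\ v = wsum w L.

(** A face of the convex polytope conv(L): its intersection with a
    supporting line {a x + b y = c} (a = b = c = 0 gives the whole cell). *)
Definition face (L : list pt2) (F : pt2 -> Prop) : Prop :=
  exists a b c : R,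
    (forall w, in_hull L w -> a * fst w + b * snd w <= c) /\
    (forall v, F v <-> (in_hull L v /\ a * fst v + b * snd v = c)).

Definition is_metric {X : Type} (d : X -> X -> R) : Prop :=
  (forall x y, d x y = 0 <-> x = y) /\
  (forall x y, d x y = d y x) /\
  (forall x y z, d x z <= d x y + d y z).

Definition geodesic {X : Type} (d : X -> X -> R) (g : R -> X) (a b : X) : Prop :=
  g 0 = a /\ g (d a b) = b /\
  forall s t, 0 <= s <= d a b -> 0 <= t <= d a b -> d (g s) (g t) = Rabs (s - t).

(** The geodesic segment [a,b] (as a set); in a CAT(0) space the geodesic
    is unique, so this is the image of the unique geodesic. *)
Definition seg {X : Type} (d : X -> X -> R) (a b : X) (z : X) : Prop :=
  exists g, geodesic d g a b /\ exists t, 0 <= t <= d a b /\ z = g t.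

Definition cpt (A B : pt2) (L s : R) : pt2 :=
  (fst A + s / L * (fst B - fst A), snd A + s / L * (snd B - snd A)).

(** CAT(0) inequality (Bridson--Haefliger): for every geodesic triangle and
    every pair of points on its sides, their distance is at most the
    Euclidean distance of the corresponding points of a comparison triangle. *)
Definition cat0_ineq {X : Type} (d : X -> X -> R) : Prop :=
  forall (x y z : X) (g1 g2 g3 : R -> X),
    geodesic d g1 x y -> geodesic d g2 y z -> geodesic d g3 z x ->
    forall A B C : pt2,
      edist A B = d x y -> edist B C = d y z -> edist C A = d z x ->
      let sides := [(g1, A, B, d x y); (g2, B, C, d y z); (g3, C, A, d z x)] in
      forall S1 S2, In S1 sides -> In S2 sides ->
      match S1, S2 with
      | (h1, P1, Q1, L1), (h2, P2, Q2, L2) =>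
          forall s t, 0 <= s <= L1 -> 0 <= t <= L2 ->
            d (h1 s) (h2 t) <= edist (cpt P1 Q1 L1 s) (cpt P2 Q2 L2 t)
      end.

Definition CAT0 {X : Type} (d : X -> X -> R) : Prop :=
  is_metric d /\
  (forall a b : X, exists g, geodesic d g a b) /\
  cat0_ineq d.

(** * Euclidean polygonal complexes (Bridson--Haefliger, Def. I.7.37, n = 2)
    Cells indexed by I; cell i is the convex polytope conv(verts i) in R^2
    (a vertex, an edge or a convex polygon), mapped into X by phi i. *)
Definition polygonal_complex {X I : Type}
  (verts : I -> list pt2) (phi : I -> pt2 -> X) : Prop :=
  (forall i, verts i <> nil) /\
  (forall i v w, in_hull (verts i) v -> in_hull (verts i) w ->
     phi i v = phi i w -> v = w) /\
  (forall x : X, exists i v, in_hull (verts i) v /\ phi i v = x) /\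
  (forall i j v w, in_hull (verts i) v -> in_hull (verts j) w ->
     phi i v = phi j w ->
     exists (T T' : pt2 -> Prop) (h : pt2 -> pt2),
       face (verts i) T /\ face (verts j) T' /\ T v /\ T' w /\
       (forall y, T y -> T' (h y)) /\
       (forall y', T' y' -> exists y, T y /\ h y = y') /\
       (forall y z, T y -> T z -> edist (h y) (h z) = edist y z) /\
       (forall y, T y -> phi j (h y) = phi i y)).

Fixpoint chain {X I : Type} (verts : I -> list pt2) (phi : I -> pt2 -> X)
  (st : list (I * pt2 * pt2)) (x y : X) : Prop :=
  match st with
  | nil => x = y
  | (i, v, w) :: rest =>
      in_hull (verts i) v /\ in_hull (verts i) w /\ phi i v = x /\
      chain verts phi rest (phi i w) y
  end.

Fixpoint chain_len {I : Type} (st : list (I * pt2 * pt2)) : R :=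
  match st with
  | nil => 0
  | (_, v, w) :: rest => edist v w + chain_len rest
  end.

Definition intrinsic_metric {X I : Type}
  (verts : I -> list pt2) (phi : I -> pt2 -> X) (d : X -> X -> R) : Prop :=
  forall x y : X,
    (forall st, chain verts phi st x y -> d x y <= chain_len st) /\
    (forall eps, 0 < eps ->
       exists st, chain verts phi st x y /\ chain_len st < d x y + eps).

Definition seg_meet {X : Type} (d : X -> X -> R) (a b c e : X) (p : X) : Prop :=
  seg d a b p /\ seg d c e p.

(* A point z lies on a geodesic segment [a,b] exactly when
   d(a,z) + d(z,b) = d(a,b).  Hence, by the triangle inequality, the function
   S(q) = d(q,x1) + d(q,x2) + d(q,x3) + d(q,x4) is at least
   d(xi,xj) + d(xk,xl) for every pairing {{i,j},{k,l}} of the indices, with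
   equality exactly on [xi,xj] ∩ [xk,xl].  Since S does not depend on the
   pairing, every non-empty such intersection is the set of minimum points of
   S. *)

From Stdlib Require Import Reals List Permutation Lra.
Import ListNotations.
Open Scope R_scope.

Definition between {X : Type} (d : X -> X -> R) (a z b : X) : Prop :=
  d a z + d z b = d a b.

Section GeodesicSegments.

Variables (X : Type) (d : X -> X -> R).
Hypothesis metric : is_metric d.

Let dist_eq0 x y : d x y = 0 <-> x = y := proj1 metric x y.
Let dist_sym x y : d x y = d y x := proj1 (proj2 metric) x y.
Let dist_triangle x y z : d x z <= d x y + d y z := proj2 (proj2 metric) x y z.

Lemma dist_nonneg x y : 0 <= d x y.
Proof.
  pose proof (dist_triangle x y x) as H.
  rewrite (dist_sym y x), (proj2 (dist_eq0 x x) eq_refl) in H. lra.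
Qed.

Lemma geodesic_dist_start g a b t :
  geodesic d g a b -> 0 <= t <= d a b -> d a (g t) = t.
Proof.
  intros [g0 [_ giso]] Ht. rewrite <- g0 at 1. rewrite giso by lra.
  rewrite Rabs_left1 by lra. ring.
Qed.

Lemma geodesic_dist_end g a b t :
  geodesic d g a b -> 0 <= t <= d a b -> d (g t) b = d a b - t.
Proof.
  intros [_ [gD giso]] Ht. rewrite <- gD at 1. rewrite giso by lra.
  rewrite Rabs_left1 by lra. ring.
Qed.

Lemma between_of_seg a b z : seg d a b z -> between d a z b.
Proof.
  intros [g [Hg [t [Ht ->]]]]. unfold between.
  rewrite (geodesic_dist_start g a b t Hg Ht), (geodesic_dist_end g a b t Hg Ht).
  ring.
Qed.

(* The triangle inequality through u and v gives one bound, the one through z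
   the other. *)
Lemma dist_across_between a z b u v :
  between d a z b -> between d a u z -> between d z v b ->
  d u v = d a b - d a u - d v b.
Proof.
  unfold between. intros Hz Hu Hv.
  pose proof (dist_triangle u z v). pose proof (dist_triangle a u b).
  pose proof (dist_triangle u v b). lra.
Qed.

Lemma geodesic_concat g1 g2 a z b :
  geodesic d g1 a z -> geodesic d g2 z b -> between d a z b ->
  geodesic d (fun t => if Rle_dec t (d a z) then g1 t else g2 (t - d a z)) a b.
Proof.
  intros G1 G2 Hz. pose proof G1 as [g10 [g1D g1iso]]. pose proof G2 as [_ [g2D g2iso]].
  pose proof (dist_nonneg a z). pose proof (dist_nonneg z b). unfold between in Hz.
  assert (across : forall s t, 0 <= s <= d a z -> d a z < t <= d a b ->
            d (g1 s) (g2 (t - d a z)) = Rabs (s - t)).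
  { intros s t Hs Ht.
    assert (Hs' := geodesic_dist_start g1 a z s G1 Hs).
    assert (Ht' : 0 <= t - d a z <= d z b) by lra.
    rewrite (dist_across_between a z b); unfold between.
    - rewrite Hs', (geodesic_dist_end g2 z b _ G2 Ht'), Rabs_left by lra. lra.
    - exact Hz.
    - rewrite Hs', (geodesic_dist_end g1 a z s G1 Hs). ring.
    - rewrite (geodesic_dist_start g2 z b _ G2 Ht'), (geodesic_dist_end g2 z b _ G2 Ht').
      ring. }
  split; [|split].
  - destruct (Rle_dec 0 (d a z)); [exact g10 | lra].
  - destruct (Rle_dec (d a b) (d a z)).
    + replace (d a b) with (d a z) by lra. rewrite g1D. apply dist_eq0. lra.
    + replace (d a b - d a z) with (d z b) by lra. exact g2D.
  - intros s t Hs Ht.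
    destruct (Rle_dec s (d a z)), (Rle_dec t (d a z)).
    + apply g1iso; lra.
    + apply across; lra.
    + rewrite dist_sym, across, Rabs_minus_sym by lra. reflexivity.
    + rewrite g2iso by lra. f_equal. ring.
Qed.

Hypothesis geodesic_space : forall a b, exists g, geodesic d g a b.

Lemma seg_iff_between a b z : seg d a b z <-> between d a z b.
Proof.
  split; [apply between_of_seg |].
  intros Hz. destruct (geodesic_space a z) as [g1 G1], (geodesic_space z b) as [g2 G2].
  exists (fun t => if Rle_dec t (d a z) then g1 t else g2 (t - d a z)).
  split; [apply geodesic_concat; assumption |].
  exists (d a z). pose proof (dist_nonneg a z). pose proof (dist_nonneg z b).
  unfold between in Hz. split; [lra |].
  destruct (Rle_dec (d a z) (d a z)); [| lra]. symmetry. apply G1.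
Qed.

Lemma seg_meet_iff_between a b c e p :
  seg_meet d a b c e p <-> between d a p b /\ between d c p e.
Proof. unfold seg_meet. rewrite !seg_iff_between. reflexivity. Qed.

Definition dist_sum (q : X) (l : list X) : R := fold_right Rplus 0 (map (d q) l).

Lemma dist_sum_perm q l l' : Permutation l l' -> dist_sum q l = dist_sum q l'.
Proof. unfold dist_sum. induction 1; simpl; lra. Qed.

Lemma dist_sum_ge a b c e q : d a b + d c e <= dist_sum q [a; b; c; e].
Proof.
  unfold dist_sum; simpl. rewrite (dist_sym q a), (dist_sym q c).
  pose proof (dist_triangle a q b). pose proof (dist_triangle c q e). lra.
Qed.

Lemma seg_meet_iff_dist_sum a b c e p :
  seg_meet d a b c e p <-> dist_sum p [a; b; c; e] = d a b + d c e.
Proof.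
  rewrite seg_meet_iff_between. unfold between, dist_sum; simpl.
  rewrite (dist_sym p a), (dist_sym p c).
  pose proof (dist_triangle a p b). pose proof (dist_triangle c p e).
  split; [| split]; lra.
Qed.

Lemma seg_meet_perm a b c e a' b' c' e' p :
  Permutation [a; b; c; e] [a'; b'; c'; e'] ->
  (exists p', seg_meet d a' b' c' e' p') ->
  seg_meet d a b c e p -> seg_meet d a' b' c' e' p.
Proof.
  intros Hperm [p' Hp'] Hp. rewrite seg_meet_iff_dist_sum in Hp, Hp' |- *.
  pose proof (dist_sum_ge a b c e p'). pose proof (dist_sum_ge a' b' c' e' p).
  rewrite (dist_sum_perm p _ _ Hperm) in Hp.
  rewrite (dist_sum_perm p' _ _ Hperm) in *. lra.
Qed.

End GeodesicSegments.

Theorem lemma8p2 :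
  forall (X I : Type) (verts : I -> list pt2) (phi : I -> pt2 -> X)
         (d : X -> X -> R),
    polygonal_complex verts phi ->
    intrinsic_metric verts phi d ->
    CAT0 d ->
    forall x1 x2 x3 x4 : X,
      ((exists p, seg_meet d x1 x2 x3 x4 p) ->
         (forall p, seg_meet d x1 x3 x2 x4 p -> seg_meet d x1 x2 x3 x4 p) /\
         (forall p, seg_meet d x1 x4 x2 x3 p -> seg_meet d x1 x2 x3 x4 p)) /\
      (let x := fun n : nat => nth n [x1; x2; x3; x4] x1 in
       forall i j k l i' j' k' l' : nat,
         Permutation [i; j; k; l] [0%nat; 1%nat; 2%nat; 3%nat] ->
         Permutation [i'; j'; k'; l'] [0%nat; 1%nat; 2%nat; 3%nat] ->
         (exists p, seg_meet d (x i) (x j) (x k) (x l) p) ->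
         (exists p, seg_meet d (x i') (x j') (x k') (x l') p) ->
         forall p, seg_meet d (x i) (x j) (x k) (x l) p <->
                   seg_meet d (x i') (x j') (x k') (x l') p).
Proof.
  intros X I verts phi d _ _ [metric [geodesics _]] x1 x2 x3 x4. split.
  - intros Hmeet. split; intros p; apply seg_meet_perm; auto.
    + apply perm_skip, perm_swap.
    + apply perm_skip, (Permutation_cons_append [x2; x3] x4).
  - intros x i j k l i' j' k' l' P P' H H' p.
    assert (Px : Permutation [x i; x j; x k; x l] [x i'; x j'; x k'; x l'])
      by exact (perm_trans (Permutation_map x P) (Permutation_sym (Permutation_map x P'))).
    split; apply seg_meet_perm; auto. apply Permutation_sym, Px.
Qed.
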